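(* Let $\alpha,\beta\in\mathsf{Lab}\uplus\underline{\mathsf{Lab}}$ with $\mathsf{und}(\alpha)=(p_\alpha,Rd_\alpha,Wt_\alpha)$, $\mathsf{und}(\beta)=(p_\beta,Rd_\beta,Wt_\beta)$, $Wt_\alpha\subseteq Rd_\alpha$, $Wt_\beta\subseteq Rd_\beta$ and $\alpha\;\iota_{lab}\;\beta$. Suppose $A\to_{ann}^{\alpha}A'$ and $A\to_{ann}^{\beta}A''$. Then there is an annotation DAG $A'''$ such that $A'\to_{ann}^{\beta}A'''$ and $A''\to_{ann}^{\alpha}A'''$.
   Context: Fix a set $\mathcal{R}$ of memory resources. Let $\mathsf{PID}=(\mathbb{N}_+)^*$ be the set of finite words over the positive integers, with $\preceq$ the prefix order. An annotation DAG is a triple $A=(V,E_R,E_W)$ such that: (1) $V\subseteq(\mathsf{PID}\times\mathbb{N})\cup\{\bot\}$ is finite, $\bot\in V$, and $(p,n)\in V$ implies $(p,n')\in V$ for all $n'\le n$; (2) $E_R,E_W\subseteq V\times\mathcal{R}\times V$, and $(v',r,v),(v'',r,v)\in E_R\cup E_W$ implies $v'=v''$; (3) $E_R\cap E_W=\varnothing$ and the directed graph $(V,E_R\cup E_W)$ is acyclic; (4) if $(v',r,v)\in E_W$ and $v'\neq\bot$ then $(v'',r,v')\in E_W$ for some $v''$; (5) $(v,r,v'),(v,r,v'')\in E_W$ implies $v'=v''$. For $r\in\mathcal{R}$, $\mathsf{last}(r,E_W)$ is $\bot$ if $E_W$ has no edge labelled $r$, and otherwise is the final node of the unique path from $\bot$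 consisting of all $E_W$-edges labelled $r$. For $p\in\mathsf{PID}$, $\mathsf{max}_p(V)=\max\{n:(p,n)\in V\}$, or $-1$ if there is no such $n$. Let $\mathsf{Lab}=\mathsf{PID}\times2^{\mathcal{R}}\times2^{\mathcal{R}}$ and $\underline{\mathsf{Lab}}=\{\underline{a}:a\in\mathsf{Lab}\}$ a disjoint copy; $\mathsf{und}(a)=\mathsf{und}(\underline a)=a$. For $a=(p,Rd,Wt)\in\mathsf{Lab}$ and annotation DAGs $A_1=(V_1,E_{R1},E_{W1})$, $A_2=(V_2,E_{R2},E_{W2})$, write $A_1\to_{ann}^{a}A_2$ iff, with $v=(p,\mathsf{max}_p(V_1)+1)$ and $\mathsf{newedge}(r,E_W,v)=(\mathsf{last}(r,E_W),r,v)$: $V_2=V_1\cup\{v\}$, $E_{R2}=E_{R1}\cup\{\mathsf{newedge}(r,E_{W1},v): r\in Rd\setminus Wt\}$, $E_{W2}=E_{W1}\cup\{\mathsf{newedge}(r,E_{W1},v): r\in Wt\}$; and write $A_2\to_{ann}^{\underline a}A_1$ iff $A_1\to_{ann}^{a}A_2$. For $\alpha,\beta\in\mathsf{Lab}\uplus\underline{\mathsf{Lab}}$ with $\mathsf{und}(\alpha)=(p_1,Rd_1,Wt_1)$, $\mathsf{und}(\beta)=(p_2,Rd_2,Wt_2)$, define $\alpha\;\iota_{lab}\;\beta$ iff $p_1\not\preceq p_2$, $p_2\not\preceq p_1$, $Rd_1\cap Wt_2=\varnothing$ and $Rd_2\cap Wt_1=\varnothing$. (In the paper, labels arise from basic blocks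 for which the set of written resources is contained in the set of read resources; this is recorded here as the hypothesis $Wt\subseteq Rd$.) *)

From mathcomp Require Import all_boot.
From Stdlib Require Import Relations.Relation_Operators.
Set Implicit Arguments. Unset Strict Implicit. Unset Printing Implicit Defensive.

(* PID = finite words over positive integers; represented by seq nat,
   membership in PID is [is_pid]. Prefix order = seq's [prefix]. *)
Definition pid := seq nat.
Definition is_pid (p : pid) : Prop := all (fun k => 0 < k) p.

(* Nodes: None = bot, Some (p, n) = (p, n). *)
Definition node := option (pid * nat).

Section Ann.
Variable R : Type. (* the set of memory resources *)

Record annDAG := AnnDAG {
  V  : node -> Prop;
  ER : node -> R -> node -> Prop;
  EW : node -> R -> node -> Prop }.

Definition edge (A : annDAG) (x y : node) : Prop :=
  exists r, ER A x r y \/ EW A x r y.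

Definition is_annDAG (A : annDAG) : Prop :=
  (exists s : seq node, forall v, V A v -> v \in s) /\
  V A None /\
  (forall p n, V A (Some (p, n)) -> is_pid p) /\
  (forall p n n', V A (Some (p, n)) -> n' <= n -> V A (Some (p, n'))) /\
  (forall x r y, ER A x r y \/ EW A x r y -> V A x /\ V A y) /\
  (forall v' v'' r v, (ER A v' r v \/ EW A v' r v) -> (ER A v'' r v \/ EW A v'' r v) ->
     v' = v'') /\
  (forall x r y, ~ (ER A x r y /\ EW A x r y)) /\
  (forall x, ~ clos_trans node (edge A) x x) /\
  (forall v' r v, EW A v' r v -> v' <> None -> exists v'', EW A v'' r v') /\
  (forall v r v' v'', EW A v r v' -> EW A v r v'' -> v' = v'').

Fixpoint consec (s : seq node) (a b : node) : Prop :=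
  match s with
  | x :: ((y :: _) as t) => (a = x /\ b = y) \/ consec t a b
  | _ => False
  end.

(* [is_last EW r v] : v = last(r, EW), i.e. v is the final node of the path
   bot = v0, v1, ..., vk whose edges are exactly the EW-edges labelled r
   (k = 0, v = bot, when there is no such edge). *)
Definition is_last (E : node -> R -> node -> Prop) (r : R) (v : node) : Prop :=
  exists s : seq node, last None s = v /\
    forall x y, E x r y <-> consec (None :: s) x y.

(* [new_index V p n] : n = max_p(V) + 1 *)
Definition new_index (X : node -> Prop) (p : pid) (n : nat) : Prop :=
  (n = 0 /\ forall k, ~ X (Some (p, k))) \/
  (exists m, n = m.+1 /\ X (Some (p, m)) /\ forall k, X (Some (p, k)) -> k <= m).

Record lab := Lab { lpid : pid; lRd : R -> Prop; lWt : R -> Prop }.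

Definition ann_step (a : lab) (A1 A2 : annDAG) : Prop :=
  is_annDAG A1 /\ is_annDAG A2 /\
  exists n, new_index (V A1) (lpid a) n /\
    let v := Some (lpid a, n) in
    (forall x, V A2 x <-> V A1 x \/ x = v) /\
    (forall x r y, ER A2 x r y <->
       ER A1 x r y \/ (y = v /\ lRd a r /\ ~ lWt a r /\ is_last (EW A1) r x)) /\
    (forall x r y, EW A2 x r y <->
       EW A1 x r y \/ (y = v /\ lWt a r /\ is_last (EW A1) r x)).

Inductive glab := Fwd of lab | Bwd of lab.

Definition und (g : glab) : lab := match g with Fwd a => a | Bwd a => a end.

Definition gstep (g : glab) (A1 A2 : annDAG) : Prop :=
  match g with Fwd a => ann_step a A1 A2 | Bwd a => ann_step a A2 A1 end.

Definition iota_lab (g1 g2 : glab) : Prop :=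
  ~ prefix (lpid (und g1)) (lpid (und g2)) /\
  ~ prefix (lpid (und g2)) (lpid (und g1)) /\
  (forall r, ~ (lRd (und g1) r /\ lWt (und g2) r)) /\
  (forall r, ~ (lRd (und g2) r /\ lWt (und g1) r)).

End Ann.

From mathcomp Require Import all_boot.
From Stdlib Require Import Relations.Relation_Operators Setoid.

(* For independent blocks (distinct threads, and neither
   writes what the other reads) the key observation is that a step by [a]
   leaves [last(r, E_W)] unchanged on the resources read by [b], and leaves the
   next index of [b]'s thread unchanged.  The closing DAG is then built
   explicitly in each of the three shapes of the diamond:
   - two forward steps [A -> A'], [A -> A'']: the union of [A'] and [A''];
   - two backward steps [A' -> A], [A'' -> A]: the intersection of [A'], [A''];
   - a forward step [A -> A'] and a backward step [A'' -> A]: [ext a na A''].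
   That these are annotation DAGs follows from a substructure criterion
   ([sub_annDAG]) in the last two cases, and from an analysis of the pairs of
   edges coming from the two sides in the union case, where acyclicity holds
   because new edges only enter the two fresh sinks. *)

Section AnnotationDAGs.
Context {R : Type}.
Implicit Types (A : annDAG R) (a b : lab R).

Lemma annDAG_finite {A} : is_annDAG A -> exists s : seq node, forall v, V A v -> v \in s.
Proof. by case. Qed.
Lemma annDAG_bot {A} : is_annDAG A -> V A None.
Proof. by case=> _ []. Qed.
Lemma annDAG_pid {A} : is_annDAG A -> forall p n, V A (Some (p, n)) -> is_pid p.
Proof. by case=> _ [_ []]. Qed.
Lemma annDAG_down {A} :
  is_annDAG A -> forall p n n', V A (Some (p, n)) -> n' <= n -> V A (Some (p, n')).
Proof. by case=> _ [_ [_ []]]. Qed.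
Lemma annDAG_ends {A} :
  is_annDAG A -> forall x r y, ER A x r y \/ EW A x r y -> V A x /\ V A y.
Proof. by case=> _ [_ [_ [_ []]]]. Qed.
Lemma annDAG_src_uniq {A} : is_annDAG A -> forall v' v'' r v,
  (ER A v' r v \/ EW A v' r v) -> (ER A v'' r v \/ EW A v'' r v) -> v' = v''.
Proof. by case=> _ [_ [_ [_ [_ []]]]]. Qed.
Lemma annDAG_disj {A} : is_annDAG A -> forall x r y, ~ (ER A x r y /\ EW A x r y).
Proof. by case=> _ [_ [_ [_ [_ [_ []]]]]]. Qed.
Lemma annDAG_acyclic {A} : is_annDAG A -> forall x, ~ clos_trans node (edge A) x x.
Proof. by case=> _ [_ [_ [_ [_ [_ [_ []]]]]]]. Qed.
Lemma annDAG_write_pred {A} : is_annDAG A ->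
  forall v' r v, EW A v' r v -> v' <> None -> exists v'', EW A v'' r v'.
Proof. by case=> _ [_ [_ [_ [_ [_ [_ [_ []]]]]]]]. Qed.
Lemma annDAG_write_det {A} :
  is_annDAG A -> forall v r v' v'', EW A v r v' -> EW A v r v'' -> v' = v''.
Proof. by case=> _ [_ [_ [_ [_ [_ [_ [_ []]]]]]]]. Qed.

Lemma clos_trans_mono (E1 E2 : node -> node -> Prop) :
  (forall x y, E1 x y -> E2 x y) ->
  forall x y, clos_trans node E1 x y -> clos_trans node E2 x y.
Proof.
move=> sub x y; elim=> [u w /sub|u z w _ IH1 _ IH2]; first exact: t_step.
exact: t_trans IH1 IH2.
Qed.

Lemma clos_trans_first {E : node -> node -> Prop} {x y} :
  clos_trans node E x y -> exists z, E x z.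
Proof. by elim=> [u w Euw|u z w _ IH _ _]; [exists w|]. Qed.

Lemma sink_extension_acyclic (E F : node -> node -> Prop) (S : node -> Prop) :
  (forall x y, E x y -> F x y \/ S y) -> (forall x y, S x -> ~ E x y) ->
  (forall x, ~ clos_trans node F x x) -> forall x, ~ clos_trans node E x x.
Proof.
move=> EF Ssink Facyc.
have path_F x y : clos_trans node E x y -> ~ S y -> clos_trans node F x y.
  elim=> [u w /EF [Fuw _|Sw nSw]|u z w _ IH1 Ezw IH2 nSw].
  - exact: t_step.
  - by case: nSw.
  - apply: t_trans (IH1 _) (IH2 nSw).
    move=> Sz; have [z' Ezz'] := clos_trans_first Ezw; exact: (Ssink _ _ Sz Ezz').
move=> x cyc; apply: (Facyc x); apply: (path_F _ _ cyc) => Sx.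
by have [y Exy] := clos_trans_first cyc; exact: (Ssink _ _ Sx Exy).
Qed.

Lemma new_index_fresh (X : node -> Prop) p n : new_index X p n -> ~ X (Some (p, n)).
Proof. by case=> [[-> notX]|[m [-> [_ le_m]]]]; [apply: notX | move/le_m; rewrite ltnn]. Qed.

Lemma new_index_lt {A p n k} :
  is_annDAG A -> new_index (V A) p n -> k < n -> V A (Some (p, k)).
Proof.
move=> ad [[-> _] //|[m [-> [Vm _]]]] lt_k.
exact: (annDAG_down ad _ _ _ Vm lt_k).
Qed.

Lemma new_index_ext (X Y : node -> Prop) p n :
  (forall k, X (Some (p, k)) <-> Y (Some (p, k))) -> new_index X p n -> new_index Y p n.
Proof.
move=> XY [[-> notX]|[m [-> [Xm le_m]]]]; first by left; split=> // k /XY /notX.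
by right; exists m; split=> //; split; [apply/XY | move=> k /XY /le_m].
Qed.

Lemma is_last_ext (E1 E2 : node -> R -> node -> Prop) r v :
  (forall x y, E1 x r y <-> E2 x r y) -> (is_last E1 r v <-> is_last E2 r v).
Proof.
move=> E12; split=> -[s [lst chain]]; exists s; split=> // x y.
  by rewrite -E12.
by rewrite E12.
Qed.

Lemma is_last_src (E : node -> R -> node -> Prop) r x :
  is_last E r x -> x = None \/ exists z, E z r x.
Proof.
have consec_last (u y : node) s : consec (u :: rcons s y) (last u s) y.
  by elim: s u => [|w s IH] u /=; [left | right; apply: IH].
move=> [s [lst chain]]; case/lastP: s lst chain => [|s y]; first by left.
by rewrite last_rcons => <- chain; right; exists (last None s); apply/chain.
Qed.

Definition ext a (n : nat) A1 : annDAG R :=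
  AnnDAG (fun x => V A1 x \/ x = Some (lpid a, n))
    (fun x r y => ER A1 x r y \/
      (y = Some (lpid a, n) /\ lRd a r /\ ~ lWt a r /\ is_last (EW A1) r x))
    (fun x r y => EW A1 x r y \/
      (y = Some (lpid a, n) /\ lWt a r /\ is_last (EW A1) r x)).

Lemma ext_last_keep a n A1 r x :
  ~ lWt a r -> (is_last (EW A1) r x <-> is_last (EW (ext a n A1)) r x).
Proof. by move=> nWr; apply: is_last_ext => x' y' /=; intuition. Qed.

Definition same A1 A2 : Prop :=
  (forall x, V A1 x <-> V A2 x) /\ (forall x r y, ER A1 x r y <-> ER A2 x r y) /\
  (forall x r y, EW A1 x r y <-> EW A2 x r y).

Lemma same_refl A : same A A.
Proof. by split; [|split]. Qed.

Definition step_at a (n : nat) A1 A2 : Prop :=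
  is_annDAG A1 /\ is_annDAG A2 /\ new_index (V A1) (lpid a) n /\ same A2 (ext a n A1).

Lemma ann_stepP a A1 A2 : ann_step a A1 A2 <-> exists n, step_at a n A1 A2.
Proof.
rewrite /ann_step /step_at /same /=; split.
  by move=> [ad1 [ad2 [n [ni rest]]]]; exists n.
by move=> [n [ad1 [ad2 [ni rest]]]]; split=> //; split=> //; exists n.
Qed.

Section OneStep.
Context {a : lab R} {n : nat} {A1 A2 : annDAG R}.
Hypothesis st : step_at a n A1 A2.
Local Notation v := (Some (lpid a, n)).

Lemma step_annDAG1 : is_annDAG A1. Proof. by case: st. Qed.
Lemma step_annDAG2 : is_annDAG A2. Proof. by case: st => _ []. Qed.
Lemma step_new_index : new_index (V A1) (lpid a) n. Proof. by case: st => _ [_ []]. Qed.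
Lemma step_V x : V A2 x <-> V A1 x \/ x = v.
Proof. by case: st => _ [_ [_ []]]. Qed.
Lemma step_ER x r y : ER A2 x r y <->
  ER A1 x r y \/ (y = v /\ lRd a r /\ ~ lWt a r /\ is_last (EW A1) r x).
Proof. by case: st => _ [_ [_ [_ []]]]. Qed.
Lemma step_EW x r y : EW A2 x r y <->
  EW A1 x r y \/ (y = v /\ lWt a r /\ is_last (EW A1) r x).
Proof. by case: st => _ [_ [_ [_ []]]]. Qed.

Lemma step_fresh : ~ V A1 v. Proof. exact: new_index_fresh step_new_index. Qed.
Lemma step_V_new : V A2 v. Proof. by apply/step_V; right. Qed.
Lemma step_V_old {x} : V A1 x -> V A2 x. Proof. by move=> Vx; apply/step_V; left. Qed.
Lemma step_ER_old {x r y} : ER A1 x r y -> ER A2 x r y.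
Proof. by move=> e; apply/step_ER; left. Qed.
Lemma step_EW_old {x r y} : EW A1 x r y -> EW A2 x r y.
Proof. by move=> e; apply/step_EW; left. Qed.

Lemma step_V_pid p k : p <> lpid a -> (V A2 (Some (p, k)) <-> V A1 (Some (p, k))).
Proof.
by move=> pa; rewrite step_V; split=> [[//|[/pa]] | Vx]; [| left].
Qed.

Lemma step_edge_old {x r y} :
  ER A1 x r y \/ EW A1 x r y -> ER A2 x r y \/ EW A2 x r y.
Proof. by case=> e; [left; apply: step_ER_old | right; apply: step_EW_old]. Qed.

Lemma step_ER_prev {x r y} : ER A2 x r y -> y <> v -> ER A1 x r y.
Proof. by case/step_ER=> [//|[-> _]]. Qed.
Lemma step_EW_prev {x r y} : EW A2 x r y -> y <> v -> EW A1 x r y.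
Proof. by case/step_EW=> [//|[-> _]]. Qed.

Lemma step_edge_cases {x r y} :
  ER A2 x r y \/ EW A2 x r y -> (ER A1 x r y \/ EW A1 x r y) \/ y = v.
Proof. by case=> [/step_ER|/step_EW]; intuition. Qed.

(* The new node is a sink, so all sources of edges are old nodes. *)
Lemma step_src_old {z y} : edge A2 z y -> V A1 z.
Proof.
move=> [r e]; have [/step_V [//|ez] _] := annDAG_ends step_annDAG2 _ _ _ e; subst z.
case: (step_edge_cases e) => [old|ey].
  by case: step_fresh; case: (annDAG_ends step_annDAG1 _ _ _ old).
by subst y; case: (annDAG_acyclic step_annDAG2 v); apply: t_step; exists r.
Qed.

Lemma step_edge_back {x y} : edge A2 x y -> edge A1 x y \/ y = v.
Proof. by move=> [r e]; case: (step_edge_cases e) => [old|->]; [left; exists r|right]. Qed.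

Lemma step_last_keep r x : ~ lWt a r -> (is_last (EW A1) r x <-> is_last (EW A2) r x).
Proof. by move=> nWr; apply: is_last_ext => x' y'; rewrite step_EW; intuition. Qed.

Lemma step_new_index_other p k :
  p <> lpid a -> (new_index (V A1) p k <-> new_index (V A2) p k).
Proof. by move=> pa; split; apply: new_index_ext => j; rewrite step_V_pid. Qed.

End OneStep.

Lemma sub_annDAG {A1 A2} : is_annDAG A1 ->
  (forall x, V A2 x -> V A1 x) -> (forall x r y, ER A2 x r y -> ER A1 x r y) ->
  (forall x r y, EW A2 x r y -> EW A1 x r y) ->
  V A2 None ->
  (forall p k k', V A2 (Some (p, k)) -> k' <= k -> V A2 (Some (p, k'))) ->
  (forall x r y, ER A2 x r y \/ EW A2 x r y -> V A2 x /\ V A2 y) ->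
  (forall v' r v, EW A2 v' r v -> v' <> None -> exists v'', EW A2 v'' r v') ->
  is_annDAG A2.
Proof.
move=> ad1 subV subER subEW bot2 down2 ends2 pred2.
have subE x r y : ER A2 x r y \/ EW A2 x r y -> ER A1 x r y \/ EW A1 x r y.
  by case=> [/subER|/subEW]; [left|right].
split; first by have [s Ss] := annDAG_finite ad1; exists s => x /subV /Ss.
split=> //; split; first by move=> p k /subV /(annDAG_pid ad1).
split=> //; split=> //; split.
  by move=> v' v'' r v /subE e' /subE e''; apply: (annDAG_src_uniq ad1 _ _ _ _ e' e'').
split; first by move=> x r y [/subER eR /subEW eW]; apply: (annDAG_disj ad1 x r y).
split.
  move=> x cyc; apply: (annDAG_acyclic ad1 x); apply: clos_trans_mono cyc.
  by move=> u w [r /subE e]; exists r.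
split=> // v r v' v'' /subEW e' /subEW e''; exact: (annDAG_write_det ad1 _ _ _ _ e' e'').
Qed.

Definition union A1 A2 : annDAG R :=
  AnnDAG (fun x => V A1 x \/ V A2 x) (fun x r y => ER A1 x r y \/ ER A2 x r y)
         (fun x r y => EW A1 x r y \/ EW A2 x r y).

Lemma union_comm A1 A2 : same (union A1 A2) (union A2 A1).
Proof. by rewrite /same /=; split; [|split]=> *; rewrite or_comm. Qed.

Section TwoForwardSteps.
Context {a b : lab R} {na nb : nat} {A A' A'' : annDAG R}.
Hypothesis sa : step_at a na A A'.
Hypothesis sb : step_at b nb A A''.
Hypothesis va_vb : Some (lpid a, na) <> Some (lpid b, nb).

Lemma cross_src_uniq {v' v'' r y} :
  ER A' v' r y \/ EW A' v' r y -> ER A'' v'' r y \/ EW A'' v'' r y -> v' = v''.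
Proof.
move=> e' e''; case: (step_edge_cases sa e') => [old'|ya].
  exact: (annDAG_src_uniq (step_annDAG2 sb) _ _ _ _ (step_edge_old sb old') e'').
case: (step_edge_cases sb e'') => [old''|yb].
  exact: (annDAG_src_uniq (step_annDAG2 sa) _ _ _ _ e' (step_edge_old sa old'')).
by case: va_vb; rewrite -ya -yb.
Qed.

Lemma cross_disj {x r y} : ER A' x r y -> EW A'' x r y -> False.
Proof.
move=> eR eW; case/(step_ER sa): (eR) => [old|[ya _]].
  exact: (annDAG_disj (step_annDAG2 sb) x r y (conj (step_ER_old sb old) eW)).
case/(step_EW sb): (eW) => [old|[yb _]].
  exact: (annDAG_disj (step_annDAG2 sa) x r y (conj eR (step_EW_old sa old))).
by case: va_vb; rewrite -ya -yb.
Qed.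

(* Two new write edges from one node carry a resource written by both blocks. *)
Lemma cross_write_det :
  (forall r, lWt a r -> ~ lWt b r) ->
  forall {x r y' y''}, EW A' x r y' -> EW A'' x r y'' -> y' = y''.
Proof.
move=> wt_ab x r y' y'' e' e''; case/(step_EW sa): (e') => [old|[_ [Wa _]]].
  exact: (annDAG_write_det (step_annDAG2 sb) _ _ _ _ (step_EW_old sb old) e'').
case/(step_EW sb): (e'') => [old|[_ [Wb _]]].
  exact: (annDAG_write_det (step_annDAG2 sa) _ _ _ _ e' (step_EW_old sa old)).
by case: (wt_ab r).
Qed.

(* All edges of the union not in [A] enter [va] or [vb], which are sinks. *)
Lemma union_acyclic : forall x, ~ clos_trans node (edge (union A' A'')) x x.
Proof.
have union_edge u w : edge (union A' A'') u w -> edge A' u w \/ edge A'' u w.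
  by case=> r [[e|e]|[e|e]]; [left|right|left|right]; exists r; tauto.
apply: (sink_extension_acyclic _ _ (fun y => y = Some (lpid a, na) \/ y = Some (lpid b, nb)))
  _ _ (annDAG_acyclic (step_annDAG1 sa)).
  move=> u w /union_edge [/(step_edge_back sa)|/(step_edge_back sb)]; tauto.
move=> u w Su /union_edge e.
have Vu : V A u by case: e => e; [exact: (step_src_old sa e) | exact: (step_src_old sb e)].
by case: Su Vu => ->; [apply: (step_fresh sa) | apply: (step_fresh sb)].
Qed.

End TwoForwardSteps.

Lemma union_annDAG {a b na nb A A' A''} :
  step_at a na A A' -> step_at b nb A A'' ->
  Some (lpid a, na) <> Some (lpid b, nb) -> (forall r, lWt a r -> ~ lWt b r) ->
  is_annDAG (union A' A'').
Proof.
move=> sa sb va_vb wt_ab; have ad' := step_annDAG2 sa; have ad'' := step_annDAG2 sb.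
have vb_va : Some (lpid b, nb) <> Some (lpid a, na) by move/esym.
have wt_ba r : lWt b r -> ~ lWt a r by move=> Wb /wt_ab.
have sides x r y : ER (union A' A'') x r y \/ EW (union A' A'') x r y ->
    (ER A' x r y \/ EW A' x r y) \/ (ER A'' x r y \/ EW A'' x r y) by rewrite /=; tauto.
split.
  have [s' Ss'] := annDAG_finite ad'; have [s'' Ss''] := annDAG_finite ad''.
  by exists (s' ++ s'') => x [/Ss'|/Ss'']; rewrite mem_cat => ->; rewrite ?orbT.
split; first by left; apply: annDAG_bot ad'.
split; first by move=> p k [/(annDAG_pid ad')|/(annDAG_pid ad'')].
split.
  move=> p k k' [Vk|Vk] le; [left; exact: (annDAG_down ad' _ _ _ Vk le)
                               | right; exact: (annDAG_down ad'' _ _ _ Vk le)].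
split.
  move=> x r y /sides [/(annDAG_ends ad')|/(annDAG_ends ad'')] /=; tauto.
split.
  move=> v' v'' r v /sides [e'|e'] /sides [e''|e''].
  - exact: (annDAG_src_uniq ad' _ _ _ _ e' e'').
  - exact: (cross_src_uniq sa sb va_vb e' e'').
  - exact/esym/(cross_src_uniq sa sb va_vb e'' e').
  - exact: (annDAG_src_uniq ad'' _ _ _ _ e' e'').
split.
  move=> x r y [[eR|eR] [eW|eW]].
  - exact: (annDAG_disj ad' x r y).
  - exact: (cross_disj sa sb va_vb eR eW).
  - exact: (cross_disj sb sa vb_va eR eW).
  - exact: (annDAG_disj ad'' x r y).
split; first exact: (union_acyclic sa sb).
split.
  move=> v' r v [e|e] nbot.
    by have [w ew] := annDAG_write_pred ad' _ _ _ e nbot; exists w; left.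
  by have [w ew] := annDAG_write_pred ad'' _ _ _ e nbot; exists w; right.
move=> v r v' v'' [e'|e'] [e''|e''].
- exact: (annDAG_write_det ad' _ _ _ _ e' e'').
- exact: (cross_write_det sa sb wt_ab e' e'').
- exact: (cross_write_det sb sa wt_ba e' e'').
- exact: (annDAG_write_det ad'' _ _ _ _ e' e'').
Qed.

Definition inter A1 A2 : annDAG R :=
  AnnDAG (fun x => V A1 x /\ V A2 x) (fun x r y => ER A1 x r y /\ ER A2 x r y)
         (fun x r y => EW A1 x r y /\ EW A2 x r y).

Lemma inter_comm A1 A2 : same (inter A1 A2) (inter A2 A1).
Proof. by rewrite /same /=; split; [|split]=> *; rewrite and_comm. Qed.

(* Two backward steps into a common [A]: the intersection of the two sources
   is an annotation DAG, being a substructure of [A']. *)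
Lemma inter_annDAG {a b na nb A A' A''} :
  step_at a na A' A -> step_at b nb A'' A -> is_annDAG (inter A' A'').
Proof.
move=> sa sb; have ad' := step_annDAG1 sa; have ad'' := step_annDAG1 sb.
apply: (sub_annDAG ad') => /=; try by move=> ? ? ? [].
- by move=> ? [].
- by split; apply: annDAG_bot.
- by move=> p k k' [Vk' Vk''] le; split; [apply: annDAG_down ad' _ _ _ Vk' le
                                        | apply: annDAG_down ad'' _ _ _ Vk'' le].
- by move=> x r y e; have := annDAG_ends ad' x r y; have := annDAG_ends ad'' x r y; tauto.
move=> v' r v [e' e''] nbot; have [w ew] := annDAG_write_pred ad' _ _ _ e' nbot.
exists w; split=> //; apply: (step_EW_prev sb (step_EW_old sa ew)) => v'b.
by case: (step_fresh sb); rewrite -v'b; case: (annDAG_ends ad'' _ _ _ (or_intror e'')).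
Qed.

Definition indep a b : Prop :=
  lpid a <> lpid b /\ (forall r, lRd a r -> ~ lWt b r) /\ (forall r, lRd b r -> ~ lWt a r).

Definition wt_in_rd a : Prop := forall r, lWt a r -> lRd a r.

Lemma indep_sym {a b} : indep a b -> indep b a.
Proof. by case=> pab [ab ba]; split=> // /esym. Qed.

Section IndependentSteps.
Context {a b : lab R}.
Hypothesis ab : indep a b.
Hypothesis wb : wt_in_rd b.

Lemma indep_pid : lpid b <> lpid a.
Proof. by case: ab => pab _ /esym. Qed.

Lemma indep_nodes (na nb : nat) : Some (lpid b, nb) <> Some (lpid a, na).
Proof. by case=> /indep_pid. Qed.

Lemma indep_last_keep {na A1 A2} : step_at a na A1 A2 -> forall r x, lRd b r ->
  (is_last (EW A1) r x <-> is_last (EW A2) r x).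
Proof. by move=> sa r x Rb; apply: (step_last_keep sa); case: ab => _ [_]; apply. Qed.

Lemma forward_forward_step {na nb A A' A'' A3} :
  step_at a na A A' -> step_at b nb A A'' ->
  is_annDAG A3 -> same A3 (union A' A'') -> ann_step b A' A3.
Proof.
move=> sa sb ad3 [HV [HER HEW]]; apply/ann_stepP; exists nb.
split; first exact: step_annDAG2 sa.
split=> //; split.
  by apply/(step_new_index_other sa _ _ indep_pid); apply: step_new_index sb.
split; first by move=> x /=; rewrite HV /= (step_V sb); have := @step_V_old _ _ _ _ sa x; tauto.
split=> x r y /=.
  rewrite HER /= (step_ER sb); have := @step_ER_old _ _ _ _ sa x r y.
  have := indep_last_keep sa r x; tauto.
rewrite HEW /= (step_EW sb); have := @step_EW_old _ _ _ _ sa x r y.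
have := indep_last_keep sa r x; have := wb r; tauto.
Qed.


Lemma backward_backward_step {na nb A A' A'' A3} :
  step_at a na A' A -> step_at b nb A'' A ->
  is_annDAG A3 -> same A3 (inter A' A'') -> ann_step b A3 A'.
Proof.
move=> sa sb ad3 [HV [HER HEW]]; apply/ann_stepP; exists nb.
have Vvb : V A' (Some (lpid b, nb)) by case/(step_V sa): (step_V_new sb) => // /(indep_nodes na nb).
have keep r x : lRd b r -> (is_last (EW A'') r x <-> is_last (EW A3) r x).
  move=> Rb; apply: is_last_ext => x' y'; rewrite HEW /=.
  have := step_EW sa x' r y'; have := @step_EW_old _ _ _ _ sb x' r y'.
  by case: ab => _ [_ /(_ r Rb)]; tauto.
split=> //; split; first exact: step_annDAG1 sa.
split.
  apply: new_index_ext (step_new_index sb) => k; rewrite HV /=.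
  have := @step_V_old _ _ _ _ sb (Some (lpid b, k)).
  by rewrite (step_V_pid sa _ _ indep_pid); tauto.
split.
  move=> x /=; rewrite HV /=; have := step_V sb x; have := @step_V_old _ _ _ _ sa x.
  have : x = Some (lpid b, nb) -> V A' x by move->.
  tauto.
have yb y : y = Some (lpid b, nb) -> y <> Some (lpid a, na) by move->; apply: indep_nodes.
split=> x r y /=.
  rewrite HER /=; have := step_ER sb x r y; have := @step_ER_old _ _ _ _ sa x r y.
  have := @step_ER_prev _ _ _ _ sa x r y; have := keep r x; have := yb y; tauto.
rewrite HEW /=; have := step_EW sb x r y; have := @step_EW_old _ _ _ _ sa x r y.
have := @step_EW_prev _ _ _ _ sa x r y; have := keep r x; have := wb r; have := yb y; tauto.
Qed.

End IndependentSteps.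

Section MixedSteps.
Context {a b : lab R} {na nb : nat} {A A' A'' : annDAG R}.
Hypothesis ab : indep a b.
Hypothesis wa : wt_in_rd a.
Hypothesis sa : step_at a na A A'.
Hypothesis sb : step_at b nb A'' A.

(* Performing [a] on [A''] yields a substructure of [A']. *)
Lemma mixed_annDAG : is_annDAG (ext a na A'').
Proof.
have ad' := step_annDAG2 sa; have ad'' := step_annDAG1 sb.
have keep r x : lRd a r -> is_last (EW A'') r x -> is_last (EW A) r x.
  by move=> Ra; apply: (iffLR (indep_last_keep (indep_sym ab) sb r x Ra)).
have src_old r x : is_last (EW A'') r x -> V A'' x.
  case/is_last_src => [->|[z ez]]; first exact: annDAG_bot.
  by case: (annDAG_ends ad'' _ _ _ (or_intror ez)).
apply: (sub_annDAG ad') => /=.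
- move=> x [Vx|->]; [exact: (step_V_old sa (step_V_old sb Vx)) | exact: step_V_new sa].
- move=> x r y [e|[-> [Ra [nWa l]]]]; first exact: (step_ER_old sa (step_ER_old sb e)).
  by apply/(step_ER sa); right; split=> //; split=> //; split=> //; exact: (keep _ _ Ra l).
- move=> x r y [e|[-> [Wa l]]]; first exact: (step_EW_old sa (step_EW_old sb e)).
  by apply/(step_EW sa); right; split=> //; split=> //; exact: (keep _ _ (wa _ Wa) l).
- by left; apply: annDAG_bot.
- move=> p k k' [Vk le|[-> ->]]; first by left; exact: (annDAG_down ad'' _ _ _ Vk le).
  rewrite leq_eqVlt => /orP [/eqP ->|lt_k]; [by right | left].
  apply/(step_V_pid sb _ _ (indep_pid (indep_sym ab))).
  exact: (new_index_lt (step_annDAG1 sa) (step_new_index sa) lt_k).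
- move=> x r y e; have := annDAG_ends ad'' x r y; have := src_old r x; move: e; tauto.
move=> v' r v [e|[_ [_ l]]] nbot.
  by have [w ew] := annDAG_write_pred ad'' _ _ _ e nbot; exists w; left.
by case/is_last_src: l => [//|[z ez]]; exists z; left.
Qed.

Lemma mixed_step_fwd : step_at a na A'' (ext a na A'').
Proof.
split; first exact: step_annDAG1 sb.
split; first exact: mixed_annDAG.
split; last exact: same_refl.
by apply/(step_new_index_other sb _ _ (indep_pid (indep_sym ab))); apply: step_new_index sa.
Qed.

Lemma mixed_step_bwd : wt_in_rd b -> ann_step b (ext a na A'') A'.
Proof.
move=> wb; have s3 := mixed_step_fwd; apply/ann_stepP; exists nb.
split; first exact: mixed_annDAG.
split; first exact: step_annDAG2 sa.
split; first by apply/(step_new_index_other s3 _ _ (indep_pid ab)); apply: step_new_index sb.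
have keepA r x := indep_last_keep (indep_sym ab) sb r x.
have keepB r x : lRd b r -> (is_last (EW A'') r x <-> is_last (EW (ext a na A'')) r x).
  by move=> Rb; apply: ext_last_keep; case: ab => _ [_]; apply.
split; first by move=> x /=; rewrite (step_V sa) (step_V sb); tauto.
split=> x r y /=.
  rewrite (step_ER sa) (step_ER sb); have := keepA r x; have := keepB r x; tauto.
rewrite (step_EW sa) (step_EW sb); have := keepA r x; have := keepB r x.
have := wa r; have := wb r; tauto.
Qed.

End MixedSteps.

Lemma forward_forward_diamond {a b na nb A A' A''} :
  indep a b -> wt_in_rd a -> wt_in_rd b ->
  step_at a na A A' -> step_at b nb A A'' ->
  exists A3, ann_step b A' A3 /\ ann_step a A'' A3.
Proof.
move=> ab wa wb sa sb.
have ad : is_annDAG (union A' A'').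
  apply: (union_annDAG sa sb); first by move/esym; apply: (indep_nodes ab).
  by move=> r /wa Ra; case: ab => _ [/(_ r Ra)].
exists (union A' A''); split; first exact: (forward_forward_step ab wb sa sb ad (same_refl _)).
exact: (forward_forward_step (indep_sym ab) wa sb sa ad (union_comm A' A'')).
Qed.

Lemma backward_backward_diamond {a b na nb A A' A''} :
  indep a b -> wt_in_rd a -> wt_in_rd b ->
  step_at a na A' A -> step_at b nb A'' A ->
  exists A3, ann_step b A3 A' /\ ann_step a A3 A''.
Proof.
move=> ab wa wb sa sb; have ad := inter_annDAG sa sb.
exists (inter A' A''); split; first exact: (backward_backward_step ab wb sa sb ad (same_refl _)).
exact: (backward_backward_step (indep_sym ab) wa sb sa ad (inter_comm A' A'')).
Qed.

Lemma forward_backward_diamond {a b na nb A A' A''} :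
  indep a b -> wt_in_rd a -> wt_in_rd b ->
  step_at a na A A' -> step_at b nb A'' A ->
  exists A3, ann_step b A3 A' /\ ann_step a A'' A3.
Proof.
move=> ab wa wb sa sb; exists (ext a na A''); split; first exact: (mixed_step_bwd ab wa sa sb wb).
by apply/ann_stepP; exists na; apply: (mixed_step_fwd ab wa sa sb).
Qed.

End AnnotationDAGs.

Lemma iota_lab_indep (R : Type) (alpha beta : glab R) :
  iota_lab alpha beta -> indep (und alpha) (und beta).
Proof.
case=> npre [_ [rw wr]]; split; first by move=> e; apply: npre; rewrite e prefix_refl.
by split=> r Rr Wr; [apply: (rw r) | apply: (wr r)].
Qed.

Theorem mainTheorem6 (R : Type) (alpha beta : glab R) (A A' A'' : annDAG R) :
  is_pid (lpid (und alpha)) -> is_pid (lpid (und beta)) ->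
  (forall r, lWt (und alpha) r -> lRd (und alpha) r) ->
  (forall r, lWt (und beta) r -> lRd (und beta) r) ->
  iota_lab alpha beta ->
  gstep alpha A A' -> gstep beta A A'' ->
  exists A''' : annDAG R, gstep beta A' A''' /\ gstep alpha A'' A'''.
Proof.
move=> _ _ wa wb /iota_lab_indep ab.
case: alpha wa ab => a wa; case: beta wb => b wb /= ab /ann_stepP [na sa] /ann_stepP [nb sb].
- exact: (forward_forward_diamond ab wa wb sa sb).
- exact: (forward_backward_diamond ab wa wb sa sb).
- have [A3 [s3b s3a]] := forward_backward_diamond (indep_sym ab) wb wa sb sa.
  by exists A3.
- exact: (backward_backward_diamond ab wa wb sa sb).
Qed.
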